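(* Let $n$ be a positive integer, let $m$ be a real number with $7n^{3/5}\leq m\leq n$, and let $T\geq 0$ be an integer. Suppose that for every set $\Sigma'\subset[n]$ with $|\Sigma'|\geq m-7n^{3/5}$, every permutation of $\Sigma'$ contains a pair of close twins of length at least $T$. Then for every set $\Sigma\subset[n]$ with $|\Sigma|\geq m$, every permutation of $\Sigma$ contains a pair of close twins of length at least $T+n^{1/5}$.
   Context: A permutation of a finite set $\Sigma\subset\mathbb{N}$ is a sequence in which every element of $\Sigma$ appears exactly once; a subpermutation of a permutation is a subsequence of it. Two sequences $(a_1,\dots,a_L)$ and $(b_1,\dots,b_L)$ of distinct numbers are order-isomorphic if for all $i,j$: $a_i<a_j \iff b_i<b_j$. Two subpermutations of a permutation are called twins if they are order-isomorphic and disjoint (share no symbol); their length is their common number of entries. For a fixed $n$, twins $(a_1,\dots,a_L)$ and $(b_1,\dots,b_L)$ (where $a_i$ corresponds to $b_i$) are called close if $|b_i-a_i|\leq n^{2/5}$ for all $i$. The empty pair of subpermutations counts as close twins of length $0$. *)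

From Stdlib Require Import Reals List Permutation.
Import ListNotations.
Open Scope R_scope.

Inductive subseq : list nat -> list nat -> Prop :=
| subseq_nil : subseq [] []
| subseq_skip : forall x s t, subseq s t -> subseq s (x :: t)
| subseq_take : forall x s t, subseq s t -> subseq (x :: s) (x :: t).

Definition order_iso (a b : list nat) : Prop :=
  length a = length b /\
  forall i j, (i < length a)%nat -> (j < length a)%nat ->
    ((nth i a 0 < nth j a 0)%nat <-> (nth i b 0 < nth j b 0)%nat).

Definition twins (p a b : list nat) : Prop :=
  subseq a p /\ subseq b p /\ order_iso a b /\
  (forall x, In x a -> ~ In x b).

Definition close_twins (n : nat) (p a b : list nat) : Prop :=
  twins p a b /\
  forall i, (i < length a)%nat ->
    Rabs (INR (nth i b 0%nat) - INR (nth i a 0%nat)) <= Rpower (INR n) (2/5).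

Definition has_close_twins_len_ge (n : nat) (p : list nat) (x : R) : Prop :=
  exists a b, close_twins n p a b /\ INR (length a) >= x.

Definition subset_of_n (n : nat) (Sigma : list nat) : Prop :=
  NoDup Sigma /\ forall x, In x Sigma -> (1 <= x <= n)%nat.

(* Let x = n^(1/5), D = floor(x^2) and c = floor(x).  In a prefix P of the permutation of length
   about 5x^3, a greedy scan of the sorted values finds more than c^3 pairwise separated triples
   of values, each spanning at most D.  Two applications of the Erdos-Szekeres theorem to the
   positions in P of the three corners give c + 1 triples on which two of the corners occur in the
   same order; these corners form close twins of length c + 1 in P.  Deleting P and the c + 1
   windows [l, l + D] of those triples removes at most 7x^3 symbols, so the hypothesis yields close
   twins of length T among the remaining ones.  Being D-close and outside every window, their
   entries compare with each window in the same way, so both pairs of twins concatenate. *)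

From Stdlib Require Import Bool ZArith Reals List Permutation Sorted Lia Lra.
Import ListNotations.
Open Scope nat_scope.

Lemma Permutation_filter {X : Type} (f : X -> bool) (l l' : list X) :
  Permutation l l' -> Permutation (filter f l) (filter f l').
Proof.
  induction 1; simpl; auto.
  - destruct (f x); auto.
  - destruct (f x), (f y); auto; apply perm_swap.
  - eapply perm_trans; eauto.
Qed.

Lemma StronglySorted_seq (a k : nat) : StronglySorted lt (seq a k).
Proof.
  revert a; induction k as [|k IH]; intros a; simpl; constructor; auto.
  apply Forall_forall; intros y Hy; apply in_seq in Hy; lia.
Qed.

Lemma StronglySorted_filter {X : Type} (R : X -> X -> Prop) (h : X -> bool) (l : list X) :
  StronglySorted R l -> StronglySorted R (filter h l).
Proof.
  induction 1 as [|x l Hs IH Hx]; simpl; [constructor|]; destruct (h x); auto.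
  constructor; auto; rewrite Forall_forall in *.
  intros y Hy; apply filter_In in Hy; apply Hx; tauto.
Qed.

Lemma StronglySorted_map {X Y : Type} (R : Y -> Y -> Prop) (h : X -> Y) (l : list X) :
  StronglySorted (fun x y => R (h x) (h y)) l -> StronglySorted R (map h l).
Proof.
  induction 1 as [|x l Hs IH Hx]; simpl; constructor; auto.
  rewrite Forall_forall in *; intros y Hy; apply in_map_iff in Hy as (z & <- & Hz); auto.
Qed.

Lemma StronglySorted_impl_in {X : Type} (R R' : X -> X -> Prop) (l : list X) :
  (forall x y, In x l -> In y l -> R x y -> R' x y) -> StronglySorted R l -> StronglySorted R' l.
Proof.
  intros Himp Hs; induction Hs as [|x l Hs IH Hx]; constructor.
  - apply IH; intros; apply Himp; simpl; auto.
  - rewrite Forall_forall in *; intros y Hy; apply Himp; simpl; auto.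
Qed.

Lemma StronglySorted_trichotomy {X : Type} (R : X -> X -> Prop) (l : list X) (x y : X) :
  StronglySorted R l -> In x l -> In y l -> x = y \/ R x y \/ R y x.
Proof.
  induction 1 as [|z l Hs IH Hz]; [contradiction|]; rewrite Forall_forall in Hz.
  intros [<-|Hx] [<-|Hy]; auto.
Qed.

Lemma StronglySorted_NoDup {X : Type} (R : X -> X -> Prop) (l : list X) :
  (forall x, In x l -> ~ R x x) -> StronglySorted R l -> NoDup l.
Proof.
  intros Hirr Hs; induction Hs as [|x l Hs IH Hx]; constructor.
  - rewrite Forall_forall in Hx; intros Hin; apply (Hirr x); simpl; auto.
  - apply IH; intros y Hy; apply Hirr; simpl; auto.
Qed.

Lemma subseq_nil_l (l : list nat) : subseq [] l.
Proof. induction l; constructor; auto. Qed.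

Lemma subseq_app (a l b l' : list nat) :
  subseq a l -> subseq b l' -> subseq (a ++ b) (l ++ l').
Proof. intros Ha Hb; induction Ha; simpl; [exact Hb|apply subseq_skip|apply subseq_take]; auto. Qed.

Lemma subseq_incl (a l : list nat) : subseq a l -> incl a l.
Proof. induction 1; intros y Hy; simpl in *; intuition. Qed.

Lemma subseq_trans (a b c : list nat) : subseq a b -> subseq b c -> subseq a c.
Proof.
  intros Hab Hbc; revert a Hab; induction Hbc; intros a Hab.
  - inversion Hab; constructor.
  - apply subseq_skip; auto.
  - inversion Hab; subst; [apply subseq_skip|apply subseq_take]; auto.
Qed.

Lemma subseq_filter (f : nat -> bool) (l : list nat) : subseq (filter f l) l.
Proof.
  induction l as [|x l IH]; simpl; [constructor|].
  destruct (f x); [apply subseq_take|apply subseq_skip]; auto.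
Qed.

Fixpoint position (x : nat) (l : list nat) : nat :=
  match l with [] => 0 | y :: l' => if x =? y then 0 else S (position x l') end.

Lemma nth_position (x : nat) (l : list nat) :
  In x l -> position x l < length l /\ nth (position x l) l 0 = x.
Proof.
  induction l as [|y l IH]; simpl; intros Hx; [contradiction|].
  destruct (Nat.eqb_spec x y) as [->|Hxy]; [split; auto; lia|].
  destruct Hx as [->|Hx]; [congruence|]. destruct (IH Hx); split; auto; lia.
Qed.

Lemma position_inj (l : list nat) (x y : nat) :
  In x l -> In y l -> position x l = position y l -> x = y.
Proof. intros Hx Hy E. rewrite <- (proj2 (nth_position x l Hx)), E. apply nth_position, Hy. Qed.

Lemma StronglySorted_position_tail (y : nat) (P l : list nat) :
  ~ In y l -> StronglySorted (fun u v => position u (y :: P) < position v (y :: P)) l ->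
  StronglySorted (fun u v => position u P < position v P) l.
Proof.
  intros Hy Hs; induction Hs as [|u l Hs IH Hu]; constructor.
  - apply IH; intros H; apply Hy; right; auto.
  - rewrite Forall_forall in *; intros v Hv; specialize (Hu v Hv); simpl in Hu.
    destruct (Nat.eqb_spec u y); [subst; exfalso; apply Hy; left; auto|].
    destruct (Nat.eqb_spec v y); [subst; exfalso; apply Hy; right; auto|]. lia.
Qed.

Lemma subseq_of_sorted_positions (P l : list nat) :
  incl l P -> StronglySorted (fun u v => position u P < position v P) l -> subseq l P.
Proof.
  revert l; induction P as [|y P IH]; intros l Hin Hs.
  - destruct l as [|x l]; [constructor|]. destruct (Hin x (or_introl eq_refl)).
  - destruct l as [|x l]; [apply subseq_nil_l|].
    inversion Hs as [|? ? Hs' Hx]; subst. rewrite Forall_forall in Hx.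
    assert (Hy : ~ In y l).
    { intros Hyl; specialize (Hx y Hyl); simpl in Hx; rewrite Nat.eqb_refl in Hx; lia. }
    destruct (Nat.eqb_spec x y) as [->|Hxy].
    + apply subseq_take, IH; [|apply (StronglySorted_position_tail y); auto].
      intros z Hz; destruct (Hin z (or_intror Hz)) as [->|]; tauto.
    + apply subseq_skip, IH.
      * intros z Hz; destruct (Hin z Hz) as [<-|]; auto.
        destruct Hz as [E|]; [congruence|tauto].
      * apply (StronglySorted_position_tail y); [intros [<-|]; auto|constructor; auto].
        rewrite Forall_forall; auto.
Qed.

Lemma order_iso_app (a1 b1 a2 b2 : list nat) :
  order_iso a1 b1 -> order_iso a2 b2 ->
  (forall i j, i < length a1 -> j < length a2 ->
     (nth i a1 0 < nth j a2 0 <-> nth i b1 0 < nth j b2 0) /\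
     (nth j a2 0 < nth i a1 0 <-> nth j b2 0 < nth i b1 0)) ->
  order_iso (a1 ++ a2) (b1 ++ b2).
Proof.
  intros [L1 H1] [L2 H2] Hcross. split; [rewrite !length_app; lia|].
  intros i j Hi Hj; rewrite length_app in Hi, Hj.
  destruct (Nat.lt_ge_cases i (length a1)), (Nat.lt_ge_cases j (length a1)).
  - rewrite !app_nth1 by lia. auto.
  - rewrite (app_nth1 a1), (app_nth1 b1), (app_nth2 a1), (app_nth2 b1) by lia.
    rewrite <- L1. apply Hcross; lia.
  - rewrite (app_nth2 a1), (app_nth2 b1), (app_nth1 a1), (app_nth1 b1) by lia.
    rewrite <- L1. apply Hcross; lia.
  - rewrite !app_nth2 by lia. rewrite <- L1. apply H2; lia.
Qed.

Lemma twins_subseq (q q' a b : list nat) : subseq q q' -> twins q a b -> twins q' a b.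
Proof.
  intros Hq (Ha & Hb & Hiso & Hdisj).
  split; [|split]; [eapply subseq_trans; eauto|eapply subseq_trans; eauto|auto].
Qed.

Definition in_window (D l v : nat) : Prop := l <= v <= l + D.

Definition windowed (D : nat) (W a b : list nat) : Prop :=
  forall i, i < length a ->
    exists l, In l W /\ in_window D l (nth i a 0) /\ in_window D l (nth i b 0).

Definition close_within (D : nat) (a b : list nat) : Prop :=
  forall i, i < length a -> nth i a 0 <= nth i b 0 + D /\ nth i b 0 <= nth i a 0 + D.

Lemma windowed_close_within (D : nat) (W a b : list nat) :
  windowed D W a b -> close_within D a b.
Proof. intros Hw i Hi; destruct (Hw i Hi) as (l & _ & H1 & H2); unfold in_window in *; lia. Qed.

Lemma close_within_app (D : nat) (a1 b1 a2 b2 : list nat) :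
  length a1 = length b1 -> close_within D a1 b1 -> close_within D a2 b2 ->
  close_within D (a1 ++ a2) (b1 ++ b2).
Proof.
  intros L H1 H2 i Hi; rewrite length_app in Hi.
  destruct (Nat.lt_ge_cases i (length a1)).
  - rewrite !app_nth1 by lia. auto.
  - rewrite !app_nth2 by lia. rewrite <- L. apply H2; lia.
Qed.

Lemma window_comparison (D l u u' v v' : nat) :
  in_window D l u -> in_window D l u' -> ~ in_window D l v -> ~ in_window D l v' ->
  v <= v' + D -> v' <= v + D ->
  (u < v <-> u' < v') /\ (v < u <-> v' < u').
Proof. unfold in_window; lia. Qed.

Lemma twins_app (P Q a1 b1 a2 b2 W : list nat) (D : nat) :
  twins P a1 b1 -> windowed D W a1 b1 -> twins Q a2 b2 -> close_within D a2 b2 ->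
  (forall v, In v a2 \/ In v b2 -> ~ In v P /\ forall l, In l W -> ~ in_window D l v) ->
  twins (P ++ Q) (a1 ++ a2) (b1 ++ b2).
Proof.
  intros (Ha1 & Hb1 & Hiso1 & Hdisj1) Hwin (Ha2 & Hb2 & Hiso2 & Hdisj2) Hclose Hout.
  assert (Hin_a1 := subseq_incl _ _ Ha1). assert (Hin_b1 := subseq_incl _ _ Hb1).
  split; [|split; [|split]].
  - apply subseq_app; auto.
  - apply subseq_app; auto.
  - apply order_iso_app; auto. intros i j Hi Hj.
    assert (Hj' : j < length b2) by (destruct Hiso2 as [L _]; lia).
    destruct (Hwin i Hi) as (l & Hl & Hu & Hu').
    destruct (Hout _ (or_introl (nth_In a2 0 Hj))) as [_ Hv].
    destruct (Hout _ (or_intror (nth_In b2 0 Hj'))) as [_ Hv'].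
    destruct (Hclose j Hj). apply window_comparison with D l; auto.
  - intros v Hv Hv'; apply in_app_or in Hv, Hv'.
    destruct Hv as [Hv|Hv], Hv' as [Hv'|Hv'].
    + apply (Hdisj1 v); auto.
    + apply (Hout v); auto.
    + apply (Hout v); auto.
    + apply (Hdisj2 v); auto.
Qed.

Section ErdosSzekeres.
Context {A : Type}.

Definition injective_on (f : A -> nat) (X : list A) : Prop :=
  forall x y, In x X -> In y X -> f x = f y -> x = y.
Definition concordant (f g : A -> nat) (Y : list A) : Prop :=
  forall x y, In x Y -> In y Y -> f x < f y -> g x < g y.
Definition discordant (f g : A -> nat) (Y : list A) : Prop :=
  forall x y, In x Y -> In y Y -> f x < f y -> g y < g x.

Lemma argmax_exists (f : A -> nat) (x : A) (l : list A) :
  exists z, In z (x :: l) /\ forall y, In y (x :: l) -> f y <= f z.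
Proof.
  revert x; induction l as [|x' l IH]; intros x.
  - exists x; split; [left; auto|]; intros y [->|[]]; lia.
  - destruct (IH x') as (z & Hz & Hmax).
    destruct (Nat.le_gt_cases (f x) (f z)).
    + exists z; split; [right; auto|]; intros y [->|Hy]; auto.
    + exists x; split; [left; auto|]; intros y [->|Hy]; auto; specialize (Hmax y Hy); lia.
Qed.

Lemma argmin_exists (f : A -> nat) (x : A) (l : list A) :
  exists z, In z (x :: l) /\ forall y, In y (x :: l) -> f z <= f y.
Proof.
  revert x; induction l as [|x' l IH]; intros x.
  - exists x; split; [left; auto|]; intros y [->|[]]; lia.
  - destruct (IH x') as (z & Hz & Hmin).
    destruct (Nat.le_gt_cases (f z) (f x)).
    + exists z; split; [right; auto|]; intros y [->|Hy]; auto.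
    + exists x; split; [left; auto|]; intros y [->|Hy]; auto; specialize (Hmin y Hy); lia.
Qed.

Section Dominance.
Variables f g : A -> nat.

Definition dominates (x y : A) : bool := (f x <? f y) && (g x <? g y).

Definition maximal_in (X : list A) (x : A) : bool := negb (existsb (dominates x) X).

Lemma dominatesP (x y : A) : dominates x y = true <-> f x < f y /\ g x < g y.
Proof. unfold dominates; rewrite andb_true_iff, !Nat.ltb_lt; tauto. Qed.

Lemma maximal_inP (X : list A) (x : A) :
  maximal_in X x = true <-> forall y, In y X -> ~ (f x < f y /\ g x < g y).
Proof.
  unfold maximal_in; rewrite negb_true_iff, <- not_true_iff_false, existsb_exists.
  split; [intros H y Hy Hd; apply H; exists y; rewrite dominatesP; auto|].
  intros H (y & Hy & Hd); apply (H y Hy), dominatesP, Hd.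
Qed.

Lemma maximal_above (X : list A) (w : A) :
  exists z, (z = w \/ In z X /\ f w < f z /\ g w < g z) /\ maximal_in X z = true.
Proof.
  destruct (argmax_exists f w (filter (dominates w) X)) as (z & Hz & Hmax).
  assert (Hzw : z = w \/ In z X /\ f w < f z /\ g w < g z).
  { destruct Hz as [<-|Hz]; [auto|]. apply filter_In in Hz. rewrite dominatesP in Hz. tauto. }
  exists z; split; auto.
  apply maximal_inP; intros y Hy [Hf Hg].
  assert (Hyw : In y (filter (dominates w) X)).
  { apply filter_In; rewrite dominatesP; split; [auto|destruct Hzw as [->|(_ & ? & ?)]; lia]. }
  specialize (Hmax y (or_intror Hyw)); lia.
Qed.

Lemma maximal_discordant (X : list A) :
  injective_on g X -> discordant f g (filter (maximal_in X) X).
Proof.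
  intros Hg x y Hx Hy Hxy; apply filter_In in Hx as [HxX Hx], Hy as [HyX _].
  rewrite maximal_inP in Hx.
  destruct (Nat.lt_trichotomy (g x) (g y)) as [H|[H|H]]; auto.
  - exfalso; apply (Hx y HyX); auto.
  - rewrite (Hg x y HxX HyX H) in Hxy; lia.
Qed.

Lemma concordant_extend (X Y : list A) :
  injective_on f X -> incl Y (filter (fun x => negb (maximal_in X x)) X) -> Y <> [] ->
  concordant f g Y -> exists z, In z X /\ ~ In z Y /\ concordant f g (z :: Y).
Proof.
  intros Hf HYX HY HcY.
  destruct Y as [|y0 Y0]; [congruence|].
  destruct (argmax_exists f y0 Y0) as (w & Hw & Hmax).
  destruct (proj1 (filter_In _ _ _) (HYX w Hw)) as [HwX Hwn].
  destruct (maximal_above X w) as (z & [<-|(HzX & Hfz & Hgz)] & Hz);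
    [rewrite Hz in Hwn; discriminate|].
  assert (Hbelow : forall u, In u (y0 :: Y0) -> f u < f z /\ g u < g z).
  { intros u Hu. destruct (Nat.lt_trichotomy (f u) (f w)) as [H|[H|H]].
    - specialize (HcY u w Hu Hw H); lia.
    - assert (HuX : In u X) by (apply HYX, filter_In in Hu; tauto).
      rewrite (Hf u w HuX HwX H); auto.
    - specialize (Hmax u Hu); lia. }
  exists z; split; [auto|split].
  - intros HzY; apply HYX, filter_In in HzY; rewrite Hz in HzY; destruct HzY; discriminate.
  - intros x y [<-|Hx] [<-|Hy] Hxy; try lia;
      [specialize (Hbelow y Hy)|specialize (Hbelow x Hx)|apply HcY]; auto; lia.
Qed.

(* Mirsky's argument: the maximal elements form a discordant set; if there are at most [s] of
   them, a concordant chain among the others extends by a maximal element. *)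
Lemma erdos_szekeres (s r : nat) (X : list A) :
  NoDup X -> injective_on f X -> injective_on g X -> r * s < length X ->
  exists Y, NoDup Y /\ incl Y X /\
    (S r <= length Y /\ concordant f g Y \/ S s <= length Y /\ discordant f g Y).
Proof.
  revert X; induction r as [|r IH]; intros X Hnd Hf Hg Hl.
  - destruct X as [|x X]; [simpl in Hl; lia|].
    exists [x]; split; [repeat constructor; auto|split; [intros y [->|[]]; left; auto|]].
    left; split; [simpl; lia|]; intros a b [->|[]] [->|[]]; lia.
  - set (M := filter (maximal_in X) X).
    destruct (Nat.le_gt_cases (S s) (length M)) as [HM|HM].
    + exists M; split; [apply NoDup_filter; auto|split].
      * intros y Hy; apply filter_In in Hy; tauto.
      * right; split; [auto|apply maximal_discordant; auto].
    + set (X' := filter (fun x => negb (maximal_in X x)) X).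
      assert (HX' : r * s < length X').
      { pose proof (filter_length (maximal_in X) X); fold M X' in H; simpl in Hl; lia. }
      assert (HX'X : incl X' X) by (intros y Hy; apply filter_In in Hy; tauto).
      destruct (IH X') as (Y & HndY & HYX' & [[HlY HcY]|[HlY HdY]]); auto.
      * apply NoDup_filter; auto.
      * intros x y Hx Hy; apply Hf; auto.
      * intros x y Hx Hy; apply Hg; auto.
      * destruct (concordant_extend X Y) as (z & HzX & HzY & Hc); auto.
        { intros E; subst Y; simpl in HlY; lia. }
        exists (z :: Y); split; [constructor; auto|split; [|left; split; [simpl; lia|auto]]].
        intros y [<-|Hy]; auto.
      * exists Y; split; [auto|split; [intros y Hy; auto|right; auto]].
Qed.

End Dominance.

Lemma concordant_incl (f g : A -> nat) (Y Y' : list A) :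
  incl Y' Y -> concordant f g Y -> concordant f g Y'.
Proof. intros H Hc x y Hx Hy; apply Hc; auto. Qed.

(* If keys 0 and 1 are discordant on a large set and keys 0 and 2 on a subset, then keys 1 and 2
   are concordant there. *)
Lemma concordant_pair_of_three (k : nat -> A -> nat) (c : nat) (X : list A) :
  NoDup X -> (forall i, injective_on (k i) X) -> c * (c * c) < length X ->
  exists Z mu mv, NoDup Z /\ incl Z X /\ length Z = S c /\ mu <> mv /\ mu <= 2 /\ mv <= 2 /\
    concordant (k mu) (k mv) Z.
Proof.
  intros Hnd Hk Hl.
  assert (Hchain : exists Z mu mv, NoDup Z /\ incl Z X /\ S c <= length Z /\ mu <> mv /\
                     mu <= 2 /\ mv <= 2 /\ concordant (k mu) (k mv) Z).
  { destruct (erdos_szekeres (k 0) (k 1) (c * c) c X) as (Y & HndY & HYX & [[HlY HcY]|[HlY HdY]]);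
      auto.
    - exists Y, 0, 1; repeat split; auto.
    - assert (HkY : forall i, injective_on (k i) Y) by (intros i x y Hx Hy; apply Hk; auto).
      destruct (erdos_szekeres (k 0) (k 2) c c Y) as (Z & HndZ & HZY & [[HlZ HcZ]|[HlZ HdZ]]);
        auto; try lia.
      + exists Z, 0, 2; repeat split; auto; intros x Hx; auto.
      + exists Z, 1, 2; repeat split; auto; [intros x Hx; auto|].
        intros x y Hx Hy Hxy.
        destruct (Nat.lt_trichotomy (k 0 x) (k 0 y)) as [H|[H|H]].
        * specialize (HdY x y (HZY x Hx) (HZY y Hy) H); lia.
        * rewrite (HkY 0 x y (HZY x Hx) (HZY y Hy) H) in Hxy; lia.
        * apply (HdZ y x Hy Hx H). }
  destruct Hchain as (Z & mu & mv & HndZ & HZX & HlZ & Hmu & ? & ? & HcZ).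
  assert (Hfirst : incl (firstn (S c) Z) Z).
  { intros x Hx; rewrite <- (firstn_skipn (S c) Z); apply in_or_app; auto. }
  exists (firstn (S c) Z), mu, mv; repeat split; auto.
  - rewrite <- (firstn_skipn (S c) Z) in HndZ; eapply NoDup_app_remove_r; eauto.
  - intros x Hx; auto.
  - apply firstn_length_le; auto.
  - apply (concordant_incl _ _ Z); auto.
Qed.

Lemma sort_by_key (F : A -> nat) (Z : list A) :
  NoDup Z -> injective_on F Z ->
  exists Zs, Permutation Z Zs /\ StronglySorted (fun x y => F x < F y) Zs.
Proof.
  induction Z as [Z IH] using (well_founded_ind (well_founded_ltof _ (@length A))).
  intros Hnd Hinj.
  destruct Z as [|z0 Z0]; [exists []; split; constructor|].
  destruct (argmin_exists F z0 Z0) as (z & Hz & Hmin).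
  set (rest := filter (fun y => negb (F y =? F z)) (z0 :: Z0)).
  assert (Hrest : forall y, In y rest <-> In y (z0 :: Z0) /\ y <> z).
  { intros y; unfold rest; rewrite filter_In, negb_true_iff, Nat.eqb_neq.
    split; intros [Hy H]; split; auto.
    intros ->; auto. }
  assert (Hnd' : NoDup (z :: rest)).
  { constructor; [rewrite Hrest; tauto|apply NoDup_filter; auto]. }
  assert (Hlen : ltof _ (@length A) rest (z0 :: Z0)).
  { apply (NoDup_incl_length Hnd'); intros y [<-|Hy]; [auto|apply Hrest in Hy; tauto]. }
  destruct (IH rest Hlen) as (Rs & Hperm & Hsorted).
  { inversion Hnd'; auto. }
  { intros x y Hx Hy; apply Hinj; [apply Hrest in Hx|apply Hrest in Hy]; tauto. }
  exists (z :: Rs); split.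
  - apply NoDup_Permutation; auto.
    + exact (Permutation_NoDup (perm_skip z Hperm) Hnd').
    + intros y; split.
      * intros Hy; destruct (Nat.eq_dec (F y) (F z)) as [HF|HF]; [left; apply Hinj; auto|].
        right; apply (Permutation_in _ Hperm), Hrest; split; [auto|intros ->; auto].
      * intros [<-|Hy]; [auto|]; apply (Permutation_in _ (Permutation_sym Hperm)), Hrest in Hy.
        tauto.
  - constructor; [auto|apply Forall_forall; intros y Hy].
    apply (Permutation_in _ (Permutation_sym Hperm)), Hrest in Hy as [Hy Hyz].
    specialize (Hmin y Hy).
    assert (F z <> F y) by (intros HF; apply Hyz, Hinj; auto). lia.
Qed.

End ErdosSzekeres.

Notation triple := (nat * nat * nat)%type.

Definition corner (i : nat) (T : triple) : nat :=
  let '(u, v, w) := T in match i with 0 => u | 1 => v | _ => w end.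

Fixpoint short_triples (D : nat) (l : list nat) : list triple :=
  match l with
  | u :: (v :: w :: rest) as l' =>
      if w - u <=? D then (u, v, w) :: short_triples D rest else short_triples D l'
  | _ => []
  end.

Lemma short_triples_cons3 (D u v w : nat) (rest : list nat) :
  short_triples D (u :: v :: w :: rest) =
  if w - u <=? D then (u, v, w) :: short_triples D rest else short_triples D (v :: w :: rest).
Proof. reflexivity. Qed.

Lemma StronglySorted_first_three (u v w : nat) (rest : list nat) :
  StronglySorted lt (u :: v :: w :: rest) ->
  u < v /\ v < w /\ (forall x, In x rest -> w < x) /\ StronglySorted lt rest.
Proof.
  intros Hs; inversion Hs as [|? ? Hs1 Hu]; inversion Hs1 as [|? ? Hs2 Hv];
    inversion Hs2 as [|? ? Hs3 Hw]; subst.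
  rewrite Forall_forall in Hu, Hv, Hw. repeat split; simpl in *; auto.
Qed.

Lemma short_triples_spec (D : nat) (l : list nat) (T : triple) :
  StronglySorted lt l -> In T (short_triples D l) ->
  corner 0 T < corner 1 T < corner 2 T /\ corner 2 T <= corner 0 T + D /\
  forall i, In (corner i T) l.
Proof.
  induction l as [l IH] using (well_founded_ind (well_founded_ltof _ (@length nat))).
  intros Hs HT; destruct l as [|u [|v [|w rest]]]; try contradiction.
  destruct (StronglySorted_first_three u v w rest Hs) as (Huv & Hvw & Hrest & Hs3).
  rewrite short_triples_cons3 in HT; destruct (Nat.leb_spec (w - u) D).
  - destruct HT as [<-|HT].
    + simpl; split; [lia|split; [lia|intros [|[|i]]; simpl; auto]].
    + destruct (IH rest) as (H1 & H2 & H3); [unfold ltof; simpl; lia|auto|auto|].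
      split; [auto|split; [auto|intros i; simpl; auto]].
  - destruct (IH (v :: w :: rest)) as (H1 & H2 & H3); [unfold ltof; simpl; lia| |auto|].
    + inversion Hs; auto.
    + split; [auto|split; [auto|intros i; right; auto]].
Qed.

Lemma short_triples_separated (D : nat) (l : list nat) :
  StronglySorted lt l -> StronglySorted (fun T T' => corner 2 T < corner 0 T') (short_triples D l).
Proof.
  induction l as [l IH] using (well_founded_ind (well_founded_ltof _ (@length nat))).
  intros Hs; destruct l as [|u [|v [|w rest]]]; try constructor.
  destruct (StronglySorted_first_three u v w rest Hs) as (_ & _ & Hrest & Hs3).
  rewrite short_triples_cons3; destruct (Nat.leb_spec (w - u) D).
  - constructor; [apply IH; auto; unfold ltof; simpl; lia|].
    apply Forall_forall; intros T HT; apply Hrest.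
    apply (short_triples_spec D rest T Hs3 HT).
  - apply IH; [unfold ltof; simpl; lia|inversion Hs; auto].
Qed.

Definition head_slack (n : nat) (l : list nat) : nat :=
  match l with u :: v :: _ => (n - u) + (n - v) | _ => 0 end.

(* Dropping [u] because [w - u > D] lowers the slack by more than [D];
   taking a triple does not raise it. *)
Lemma short_triples_slack (D n : nat) (l : list nat) :
  StronglySorted lt l -> (forall v, In v l -> v <= n) ->
  (D + 1) * (length l - 3 * length (short_triples D l) - 2) <= head_slack n l.
Proof.
  induction l as [l IH] using (well_founded_ind (well_founded_ltof _ (@length nat))).
  intros Hs Hn; destruct l as [|u [|v [|w rest]]]; try (simpl; lia).
  destruct (StronglySorted_first_three u v w rest Hs) as (Huv & Hvw & Hrest & Hs3).
  assert (Hwn : w <= n) by (apply Hn; simpl; auto).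
  rewrite short_triples_cons3; destruct (Nat.leb_spec (w - u) D).
  - specialize (IH rest ltac:(unfold ltof; simpl; lia) Hs3 ltac:(intros; apply Hn; simpl; auto)).
    replace (length (u :: v :: w :: rest) - 3 * length ((u, v, w) :: short_triples D rest) - 2)
      with (length rest - 3 * length (short_triples D rest) - 2) by (cbn [length]; lia).
    apply (Nat.le_trans _ _ _ IH).
    destruct rest as [|x [|y r]]; simpl; try lia.
    assert (w < x /\ w < y) by (split; apply Hrest; simpl; auto). lia.
  - specialize (IH (v :: w :: rest) ltac:(unfold ltof; simpl; lia) ltac:(inversion Hs; auto)
                   ltac:(intros; apply Hn; simpl; auto)).
    cbn [length head_slack] in IH |- *. nia.
Qed.

Lemma short_triples_count (D n : nat) (l : list nat) :
  StronglySorted lt l -> (forall v, In v l -> 1 <= v <= n) ->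
  (D + 1) * (length l - 3 * length (short_triples D l) - 2) <= 2 * (n - 1).
Proof.
  intros Hs Hn; eapply Nat.le_trans;
    [apply short_triples_slack; auto; intros v Hv; apply Hn, Hv|].
  destruct l as [|u [|v r]]; simpl; try lia.
  assert (1 <= u /\ 1 <= v) by (split; apply Hn; simpl; auto). lia.
Qed.

Definition memb (v : nat) (l : list nat) : bool := existsb (Nat.eqb v) l.

Lemma membP (v : nat) (l : list nat) : memb v l = true <-> In v l.
Proof.
  unfold memb; rewrite existsb_exists; split.
  - intros (x & Hx & E); apply Nat.eqb_eq in E; subst; auto.
  - intros H; exists v; rewrite Nat.eqb_refl; auto.
Qed.

Definition sorted_values (n : nat) (P : list nat) : list nat :=
  filter (fun v => memb v P) (seq 1 n).

Section SortedValues.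
Variables (n : nat) (P : list nat).
Hypothesis P_range : forall v, In v P -> 1 <= v <= n.

Lemma in_sorted_values (v : nat) : In v (sorted_values n P) <-> In v P.
Proof.
  unfold sorted_values; rewrite filter_In, membP, in_seq.
  split; [tauto|intros H; specialize (P_range v H); split; auto; lia].
Qed.

Lemma length_sorted_values : NoDup P -> length (sorted_values n P) = length P.
Proof.
  intros HndP; apply Permutation_length, NoDup_Permutation; auto.
  - apply NoDup_filter, seq_NoDup.
  - apply in_sorted_values.
Qed.

End SortedValues.

Lemma nth_map_corner (k i : nat) (Zs : list triple) :
  nth i (map (corner k) Zs) 0 = corner k (nth i Zs (0, 0, 0)).
Proof.
  replace 0 with (corner k (0, 0, 0)) at 1 by (destruct k as [|[|]]; reflexivity).
  apply map_nth.
Qed.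

Section SeparatedTriples.
Variables (D : nat) (P : list nat) (X : list triple).
Hypothesis X_short : forall T, In T X ->
  corner 0 T < corner 1 T < corner 2 T /\ corner 2 T <= corner 0 T + D /\
  forall i, In (corner i T) P.
Hypothesis X_separated : forall T T', In T X -> In T' X ->
  T = T' \/ corner 2 T < corner 0 T' \/ corner 2 T' < corner 0 T.

Lemma corner_bounds (i : nat) (T : triple) : In T X -> corner 0 T <= corner i T <= corner 2 T.
Proof.
  intros HT; destruct (X_short T HT) as (H & _).
  destruct T as [[u v] w], i as [|[|]]; simpl in *; lia.
Qed.

Lemma corner_lt_iff (i j : nat) (T T' : triple) : In T X -> In T' X -> T <> T' ->
  corner i T < corner j T' <-> corner 2 T < corner 0 T'.
Proof.
  intros HT HT' Hne.
  pose proof (corner_bounds i T HT); pose proof (corner_bounds j T' HT').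
  destruct (X_separated T T' HT HT') as [|[|]]; [congruence|lia|lia].
Qed.

Lemma position_corner_injective (i : nat) :
  injective_on (fun T => position (corner i T) P) X.
Proof.
  intros T T' HT HT' E.
  apply position_inj in E; try apply X_short; auto.
  pose proof (corner_bounds i T HT); pose proof (corner_bounds i T' HT').
  destruct (X_separated T T' HT HT') as [|[|]]; [auto|lia|lia].
Qed.

(* Ordering [Z] by the positions of the [mu]-corners, which concordance makes also the order of
   the [mv]-corners, lists the two corners as subsequences of [P]. *)
Lemma twins_of_concordant_triples (Z : list triple) (mu mv : nat) :
  NoDup Z -> incl Z X -> mu <> mv -> mu <= 2 -> mv <= 2 ->
  concordant (fun T => position (corner mu T) P) (fun T => position (corner mv T) P) Z ->
  exists a b, length a = length Z /\ twins P a b /\ windowed D (map (corner 0) Z) a b.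
Proof.
  intros HndZ HZX Hmumv Hmu Hmv Hconc.
  destruct (sort_by_key (fun T => position (corner mu T) P) Z) as (Zs & Hperm & Hsorted); auto.
  { intros T T' HT HT'; apply position_corner_injective; auto. }
  assert (HZs : forall T, In T Zs <-> In T Z) by (intros T; split; apply Permutation_in; auto;
    apply Permutation_sym; auto).
  assert (HZsX : forall T, In T Zs -> In T X) by (intros T HT; apply HZX, HZs, HT).
  assert (Hcorner_in : forall k, incl (map (corner k) Zs) P).
  { intros k x Hx; apply in_map_iff in Hx as (T & <- & HT); apply X_short, HZsX, HT. }
  set (d := (0, 0, 0) : triple).
  assert (Hnth : forall i, i < length Zs -> In (nth i Zs d) X)
    by (intros; apply HZsX, nth_In; auto).
  exists (map (corner mu) Zs), (map (corner mv) Zs).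
  split; [rewrite length_map; apply Permutation_length, Permutation_sym, Hperm|].
  split; [split; [|split; [|split]]|].
  - apply subseq_of_sorted_positions, StronglySorted_map; auto.
  - apply subseq_of_sorted_positions, StronglySorted_map; auto.
    refine (StronglySorted_impl_in _ _ Zs _ Hsorted).
    intros T T' HT HT'; apply Hconc; apply HZs; auto.
  - split; [rewrite !length_map; auto|]; intros i j Hi Hj; rewrite length_map in Hi, Hj.
    rewrite !nth_map_corner; fold d.
    destruct (Nat.eq_dec i j) as [<-|Hij]; [split; lia|].
    assert (Hne : nth i Zs d <> nth j Zs d).
    { intros E; apply Hij; apply (NoDup_nth Zs d); auto; eapply Permutation_NoDup; eauto. }
    rewrite (corner_lt_iff mu mu), (corner_lt_iff mv mv); auto; tauto.
  - intros x Hx Hx'.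
    apply in_map_iff in Hx as (T & <- & HT), Hx' as (T' & E & HT').
    apply HZsX in HT; apply HZsX in HT'.
    destruct (X_separated T T' HT HT') as [<-|Hsep].
    + destruct (X_short T HT) as (H & _).
      destruct T as [[u v] w], mu as [|[|]], mv as [|[|]]; simpl in *; lia.
    + pose proof (corner_bounds mu T HT); pose proof (corner_bounds mv T' HT'); lia.
  - intros i Hi; rewrite length_map in Hi; rewrite !nth_map_corner; fold d.
    exists (corner 0 (nth i Zs d)); split; [apply in_map, HZs, nth_In; auto|].
    pose proof (Hnth i Hi) as HT; destruct (X_short _ HT) as (_ & HD & _).
    pose proof (corner_bounds mu _ HT); pose proof (corner_bounds mv _ HT).
    unfold in_window; lia.
Qed.

End SeparatedTriples.

Definition prefix_length (n D c : nat) : nat :=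
  3 * (c * (c * c) + 1) + 2 + 2 * (n - 1) / (D + 1).

Lemma prefix_twins (P : list nat) (n D c : nat) :
  subset_of_n n P -> prefix_length n D c <= length P ->
  exists a b W, length a = S c /\ length W = S c /\ twins P a b /\ windowed D W a b.
Proof.
  intros [HndP HPn] HlP.
  set (s := sorted_values n P); set (X := short_triples D s).
  assert (Hs : StronglySorted lt s) by apply StronglySorted_filter, StronglySorted_seq.
  assert (X_short : forall T, In T X ->
    corner 0 T < corner 1 T < corner 2 T /\ corner 2 T <= corner 0 T + D /\
    forall i, In (corner i T) P).
  { intros T HT; destruct (short_triples_spec D s T Hs HT) as (H1 & H2 & H3).
    split; [auto|split; [auto|intros i; apply (in_sorted_values n), H3; auto]]. }
  assert (X_sorted := short_triples_separated D s Hs); fold X in X_sorted.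
  assert (X_separated : forall T T', In T X -> In T' X ->
    T = T' \/ corner 2 T < corner 0 T' \/ corner 2 T' < corner 0 T)
    by (intros T T' HT HT'; exact (StronglySorted_trichotomy _ X T T' X_sorted HT HT')).
  assert (HndX : NoDup X).
  { refine (StronglySorted_NoDup _ _ _ X_sorted); intros T HT; cbv beta.
    destruct (X_short T HT) as (? & _); lia. }
  assert (HlX : c * (c * c) < length X).
  { assert (Hcount : (D + 1) * (length s - 3 * length X - 2) <= 2 * (n - 1)).
    { apply short_triples_count; auto; intros v Hv; apply HPn, (in_sorted_values n); auto. }
    apply Nat.div_le_lower_bound in Hcount; [|lia].
    unfold s in Hcount; rewrite (length_sorted_values n P HPn HndP) in Hcount.
    unfold prefix_length in HlP; lia. }
  destruct (concordant_pair_of_three (fun i T => position (corner i T) P) c X HndX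
              (position_corner_injective D P X X_short X_separated) HlX)
    as (Z & mu & mv & HndZ & HZX & HlZ & Hmumv & Hmu & Hmv & Hconc).
  destruct (twins_of_concordant_triples D P X X_short X_separated Z mu mv)
    as (a & b & Hla & Htw & Hwin); auto.
  exists a, b, (map (corner 0) Z); rewrite length_map.
  split; [congruence|split; [congruence|auto]].
Qed.

Definition outside (D : nat) (P W : list nat) (v : nat) : bool :=
  negb (memb v P || existsb (fun l => (l <=? v) && (v <=? l + D)) W).

Lemma outsideP (D : nat) (P W : list nat) (v : nat) :
  outside D P W v = true <-> ~ In v P /\ forall l, In l W -> ~ in_window D l v.
Proof.
  unfold outside, in_window.
  rewrite negb_true_iff, orb_false_iff, <- !not_true_iff_false, membP, existsb_exists.
  split; intros [H1 H2]; split; auto.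
  - intros l Hl Hw; apply H2; exists l; rewrite andb_true_iff, !Nat.leb_le; auto.
  - intros (l & Hl & Hw); rewrite andb_true_iff, !Nat.leb_le in Hw; apply (H2 l); auto.
Qed.

Lemma length_filter_outside (D : nat) (P W Sigma : list nat) : NoDup Sigma ->
  length Sigma <= length (filter (outside D P W) Sigma) + length P + length W * (D + 1).
Proof.
  intros Hnd; rewrite <- (filter_length (outside D P W) Sigma).
  enough (length (filter (fun v => negb (outside D P W v)) Sigma) <=
          length (P ++ flat_map (fun l => seq l (D + 1)) W)).
  { rewrite length_app, (flat_map_constant_length (c := D + 1)) in H; [lia|].
    intros; apply length_seq. }
  apply NoDup_incl_length; [apply NoDup_filter, Hnd|].
  intros v Hv; apply filter_In in Hv as [_ Hv].
  unfold outside in Hv; rewrite negb_involutive, orb_true_iff, membP, existsb_exists in Hv.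
  apply in_or_app; destruct Hv as [Hv|(l & Hl & Hw)]; [auto|right].
  rewrite andb_true_iff, !Nat.leb_le in Hw.
  apply in_flat_map; exists l; rewrite in_seq; split; [auto|lia].
Qed.

Lemma twins_app_outside (p a1 b1 a2 b2 W : list nat) (t D : nat) :
  twins (firstn t p) a1 b1 -> windowed D W a1 b1 ->
  twins (filter (outside D (firstn t p) W) p) a2 b2 -> close_within D a2 b2 ->
  twins p (a1 ++ a2) (b1 ++ b2) /\ close_within D (a1 ++ a2) (b1 ++ b2).
Proof.
  set (P := firstn t p); set (keep := outside D P W).
  intros Htw1 Hwin Htw2 Hcl2.
  assert (Hout : forall v, In v a2 \/ In v b2 -> ~ In v P /\ forall l, In l W -> ~ in_window D l v).
  { intros v Hv; apply outsideP.
    destruct Htw2 as (Ha2 & Hb2 & _); apply subseq_incl in Ha2, Hb2.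
    apply (proj2 (proj1 (filter_In keep v p) ltac:(destruct Hv; auto))). }
  assert (Hfilter : subseq (filter keep p) (skipn t p)).
  { rewrite <- (firstn_skipn t p) at 1; rewrite filter_app; fold P.
    rewrite (filter_ext_in keep (fun _ => false) P), filter_false; [apply subseq_filter|].
    intros v Hv; apply not_true_iff_false; unfold keep; rewrite outsideP; tauto. }
  split.
  - rewrite <- (firstn_skipn t p); apply (twins_app _ _ _ _ _ _ W D); auto.
    apply (twins_subseq (filter keep p)); auto.
  - apply close_within_app; auto; [apply Htw1|apply (windowed_close_within D W); auto].
Qed.

Lemma subset_of_n_filter (n : nat) (f : nat -> bool) (Sigma : list nat) :
  subset_of_n n Sigma -> subset_of_n n (filter f Sigma).
Proof.
  intros [Hnd HS]; split; [apply NoDup_filter, Hnd|].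
  intros v Hv; apply filter_In in Hv; apply HS; tauto.
Qed.

Lemma subset_of_n_firstn (n t : nat) (Sigma p : list nat) :
  subset_of_n n Sigma -> Permutation Sigma p -> subset_of_n n (firstn t p).
Proof.
  intros [Hnd HS] Hp; rewrite <- (firstn_skipn t p) in Hp; split.
  - apply Permutation_NoDup in Hp; [eapply NoDup_app_remove_r; eauto|auto].
  - intros v Hv; apply HS, (Permutation_in _ (Permutation_sym Hp)), in_or_app; auto.
Qed.

Open Scope R_scope.

Lemma floor_exists (r : R) : 0 <= r -> exists k : nat, INR k <= r < INR k + 1.
Proof.
  intros Hr; destruct (archimed r) as [H1 H2].
  assert (Hpos : 0 < IZR (up r)) by lra; apply lt_IZR in Hpos.
  assert (Hu : (0 <= up r - 1)%Z) by lia.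
  exists (Z.to_nat (up r - 1)); rewrite INR_IZR_INZ, Z2Nat.id, minus_IZR by auto; simpl; lra.
Qed.

Lemma Rpower_fifths (n : nat) : (0 < n)%nat ->
  let x := Rpower (INR n) (1/5) in
  0 < x /\ Rpower (INR n) (2/5) = x * x /\ Rpower (INR n) (3/5) = x * x * x /\
  INR n = x * x * x * x * x.
Proof.
  intros Hn x; assert (Hn' : 0 < INR n) by (apply lt_0_INR; auto).
  split; [apply exp_pos|]; unfold x; rewrite <- !Rpower_plus.
  split; [f_equal; field|split; [f_equal; field|]].
  replace (1/5 + 1/5 + 1/5 + 1/5 + 1/5) with 1 by field; rewrite Rpower_1; auto.
Qed.

Lemma Rabs_INR_le_floor (a b D : nat) (r : R) : INR D <= r < INR D + 1 ->
  Rabs (INR a - INR b) <= r <-> (a <= b + D /\ b <= a + D)%nat.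
Proof.
  intros Hr; rewrite !Nat.le_ngt; split.
  - intros Hab; split; intros Hlt; apply le_INR in Hlt; rewrite S_INR, plus_INR in Hlt;
      [|rewrite Rabs_minus_sym in Hab];
      pose proof (Rle_abs (INR a - INR b)); pose proof (Rle_abs (INR b - INR a)); lra.
  - intros [H1 H2]; apply Nat.le_ngt in H1, H2; apply le_INR in H1, H2; rewrite plus_INR in H1, H2.
    apply Rabs_le; lra.
Qed.

Lemma close_twins_iff (n D : nat) (p a b : list nat) :
  INR D <= Rpower (INR n) (2/5) < INR D + 1 ->
  close_twins n p a b <-> twins p a b /\ close_within D a b.
Proof.
  intros HD; unfold close_twins, close_within.
  split; intros [Htw Hcl]; split; auto; intros i Hi; specialize (Hcl i Hi);
    rewrite (Rabs_INR_le_floor _ _ D) in *; auto; tauto.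
Qed.

(* With x = n^(1/5): the prefix and the windows have at most 3x^3 + 5 + 2x^3 and
   (x + 1)(x^2 + 1) symbols, which totals at most 7x^3 because x^2 >= 7. *)
Lemma removal_budget (n D c : nat) : (0 < n)%nat -> 7 * Rpower (INR n) (3/5) <= INR n ->
  INR D <= Rpower (INR n) (2/5) < INR D + 1 -> INR c <= Rpower (INR n) (1/5) ->
  INR (prefix_length n D c + S c * (D + 1)) <= 7 * Rpower (INR n) (3/5).
Proof.
  intros Hn H7 HD Hc.
  destruct (Rpower_fifths n Hn) as (Hx & E2 & E3 & E5).
  set (x := Rpower (INR n) (1/5)) in *; rewrite E2 in HD; rewrite E3 in *; rewrite E5 in H7.
  assert (Hxx : 7 <= x * x).
  { apply Rmult_le_reg_r with (x * x * x); [apply Rmult_lt_0_compat; nra|nra]. }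
  set (q := (2 * (n - 1) / (D + 1))%nat).
  assert (Hq : INR q <= 2 * (x * x * x)).
  { pose proof (Nat.Div0.mul_div_le (2 * (n - 1)) (D + 1)) as Hq; fold q in Hq.
    assert (Hq' : ((D + 1) * q <= 2 * n)%nat) by lia.
    apply le_INR in Hq'; rewrite !mult_INR, plus_INR, E5 in Hq'; simpl in Hq'.
    pose proof (pos_INR q); nra. }
  unfold prefix_length; fold q.
  rewrite !plus_INR, !mult_INR, !plus_INR, !mult_INR, !S_INR; simpl INR.
  pose proof (pos_INR c); pose proof (pos_INR D).
  assert (INR c * (INR c * INR c) <= x * (x * x)) by (apply Rmult_le_compat; nra).
  assert ((INR c + 1) * (INR D + 1) <= (x + 1) * (x * x + 1)) by (apply Rmult_le_compat; nra).
  nra.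
Qed.

Theorem mainTheorem3 (n : nat) (m : R) (T : nat) :
  (0 < n)%nat ->
  7 * Rpower (INR n) (3/5) <= m -> m <= INR n ->
  (forall Sigma' : list nat, subset_of_n n Sigma' ->
     INR (length Sigma') >= m - 7 * Rpower (INR n) (3/5) ->
     forall p, Permutation Sigma' p -> has_close_twins_len_ge n p (INR T)) ->
  forall Sigma : list nat, subset_of_n n Sigma ->
    INR (length Sigma) >= m ->
    forall p, Permutation Sigma p ->
      has_close_twins_len_ge n p (INR T + Rpower (INR n) (1/5)).
Proof.
  intros Hn Hm1 Hm2 Hyp Sigma HSigma HlS p Hp.
  destruct (floor_exists (Rpower (INR n) (2/5))) as [D HD]; [left; apply exp_pos|].
  destruct (floor_exists (Rpower (INR n) (1/5))) as [c Hc]; [left; apply exp_pos|].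
  pose proof (removal_budget n D c Hn ltac:(lra) HD (proj1 Hc)) as Hbudget.
  rewrite plus_INR in Hbudget; pose proof (pos_INR (S c * (D + 1))).
  set (t := prefix_length n D c) in *.
  assert (Ht : (t <= length p)%nat) by (apply INR_le; rewrite <- (Permutation_length Hp); lra).
  set (P := firstn t p).
  assert (HlP : length P = t) by (apply firstn_length_le, Ht).
  destruct (prefix_twins P n D c) as (a1 & b1 & W & Hla1 & HlW & Htw1 & Hwin1);
    [apply (subset_of_n_firstn n t Sigma p); auto|lia|].
  set (keep := outside D P W).
  destruct (Hyp (filter keep Sigma)) with (p := filter keep p) as (a2 & b2 & Hcl2 & Hla2).
  - apply subset_of_n_filter, HSigma.
  - pose proof (length_filter_outside D P W Sigma (proj1 HSigma)) as Hlen.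
    rewrite HlP, HlW in Hlen; apply le_INR in Hlen; rewrite !plus_INR in Hlen; fold keep in Hlen.
    lra.
  - apply Permutation_filter, Hp.
  - apply (close_twins_iff n D) in Hcl2 as [Htw2 Hcl2]; auto.
    destruct (twins_app_outside p a1 b1 a2 b2 W t D Htw1 Hwin1 Htw2 Hcl2) as [Htw Hcl].
    exists (a1 ++ a2), (b1 ++ b2); split; [apply (close_twins_iff n D); auto|].
    rewrite length_app, plus_INR, Hla1, S_INR; lra.
Qed.
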